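(* Let $A$ be the generic $a_1\times\dots\times a_n$ table and let $\Gamma$ be any collection of subsets of $\{1,\dots,n\}$. Then $I(A)+L_\Gamma$ is a radical ideal of $R$, where $L_\Gamma=\sum_{\mathscr J\in\Gamma}L_{\mathscr J}$.
   Context: $\mathbb K$ is a field, $R=\mathbb K[x_{i_1,\dots,i_n}:1\le i_j\le a_j]$, $A=(x_{i_1,\dots,i_n})$. For a tuple $\sigma$ with $\sigma_j\in\{1,\dots,a_j\}\cup\{+\}$, $x_\sigma$ is the sum of all $x_{i_1,\dots,i_n}$ with $i_j=\sigma_j$ whenever $\sigma_j\ne+$. For $\mathscr J\subseteq\{1,\dots,n\}$, $L_{\mathscr J}$ is the ideal generated by all $x_\sigma$ with $\sigma_j\in\{1,\dots,a_j\}$ for $j\in\mathscr J$ and $\sigma_j=+$ for $j\notin\mathscr J$. $I(A)$ is the ideal generated by all generalized $2\times 2$ minors $\det\begin{pmatrix} x_{i_1,\dots,i_n} & x_{j_1,\dots,j_{l-1},i_l,j_{l+1},\dots,j_n}\\ x_{i_1,\dots,i_{l-1},j_l,i_{l+1},\dots,i_n} & x_{j_1,\dots,j_n}\end{pmatrix}$ (the ideal of the Segre variety). *)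

From HB Require Import structures.
From mathcomp Require Import all_boot all_algebra.
From mathcomp Require Import mpoly.
Set Implicit Arguments. Unset Strict Implicit. Unset Printing Implicit Defensive.
Import GRing.Theory.
Local Open Scope ring_scope.

(* Index tuples (i_1,...,i_n) with i_j in {0,...,a_j - 1} (0-based version of {1..a_j}). *)
Definition idx (n : nat) (a : 'I_n -> nat) := {dffun forall j : 'I_n, 'I_(a j)}.

Definition nvar (n : nat) (a : 'I_n -> nat) : nat := #|{: idx a}|.

(* The polynomial ring R, with one variable per index tuple. *)
Definition Rpoly (K : fieldType) (n : nat) (a : 'I_n -> nat) := {mpoly K[nvar a]}.

Definition var (K : fieldType) (n : nat) (a : 'I_n -> nat) (t : idx a) : Rpoly K a :=
  'X_(enum_rank t).

Definition upd (n : nat) (a : 'I_n -> nat) (t u : idx a) (l : 'I_n) : idx a :=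
  [ffun j => if j == l then u j else t j].

(* Generalized 2x2 minor det [[x_t, x_{u with l:=t_l}], [x_{t with l:=u_l}, x_u]]. *)
Definition gminor (K : fieldType) (n : nat) (a : 'I_n -> nat) (t u : idx a) (l : 'I_n)
  : Rpoly K a :=
  var K t * var K u - var K (upd u t l) * var K (upd t u l).

(* Partial tuples sigma: sigma_j = Some i  or  None (standing for "+"). *)
Definition ptuple (n : nat) (a : 'I_n -> nat) := {dffun forall j : 'I_n, option 'I_(a j)}.

Definition matches (n : nat) (a : 'I_n -> nat) (s : ptuple a) (t : idx a) : bool :=
  [forall j, match s j with Some k => t j == k | None => true end].

Definition xsigma (K : fieldType) (n : nat) (a : 'I_n -> nat) (s : ptuple a) : Rpoly K a :=
  \sum_(t : idx a | matches s t) var K t.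

Definition is_minor (K : fieldType) (n : nat) (a : 'I_n -> nat) (p : Rpoly K a) : Prop :=
  exists (t u : idx a) (l : 'I_n), p = gminor K t u l.

Definition is_Lgen (K : fieldType) (n : nat) (a : 'I_n -> nat) (J : {set 'I_n})
  (p : Rpoly K a) : Prop :=
  exists s : ptuple a, (forall j, (s j != None) = (j \in J)) /\ p = xsigma K s.

Definition ideal_gen (R : comNzRingType) (S : R -> Prop) (p : R) : Prop :=
  exists (m : nat) (g c : 'I_m -> R), (forall i, S (g i)) /\ p = \sum_(i < m) c i * g i.

Definition radical (R : comNzRingType) (I : R -> Prop) : Prop :=
  forall (p : R) (k : nat), I (p ^+ k) -> I p.

From HB Require Import structures.
From mathcomp Require Import all_boot all_algebra.
From mathcomp Require Import mpoly ring.
Set Implicit Arguments. Unset Strict Implicit. Unset Printing Implicit Defensive.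
Import GRing.Theory.
Local Open Scope ring_scope.

(* Fix a base tuple z and change coordinates blockwise in the Segre
   parametrization: w_{j,i} = y_{j,i} for i <> z_j and
   w_{j,z_j} = y_{j,z_j} - sum_{i <> z_j} y_{j,i}; let phi x_t = y_0 prod_j w_{j,t_j}.
   Up to this linear change phi is the monomial Segre map, so its kernel is I(A):
   two products of variables with the same column contents are congruent modulo
   the minors (straightening).  As sum_i w_{j,i} = y_{j,z_j}, phi maps x_sigma to
   y_0 prod_{j in J} w_{j,sigma_j} prod_{j notin J} y_{j,z_j}, so phi sends
   I(A) + L_Gamma into the squarefree monomial ideal M generated by the
   y_0 prod_j y_{j,t_j} with t = z outside some J in Gamma, and every balanced
   monomial of M is the image of an element of I(A) + L_Gamma.  Squarefree
   monomial ideals are radical: if p^k lies in I(A) + L_Gamma then phi p lies in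
   M, hence phi p = phi q for some q in I(A) + L_Gamma, and p - q lies in
   ker phi = I(A). *)

Lemma big_distr_dffun (R : comPzSemiRingType) (I : finType) (T_ : I -> finType)
    (F : forall i, T_ i -> R) :
  \prod_i \sum_(x : T_ i) F i x = \sum_(t : {dffun forall i, T_ i}) \prod_i F i (t i).
Proof.
pose G i : {ffun T_ i -> R} := [ffun x => F i x].
transitivity (\prod_i \sum_(x : T_ i) G i x).
  by apply: eq_bigr => i _; apply: eq_bigr => x _; rewrite ffunE.
under eq_bigr => i _ do rewrite (big_tag G).
rewrite bigA_distr_big_dep (reindex (@dffun_of_fprod I T_)).
  rewrite -(big_fprod _ _ G); apply: eq_bigr => t _; apply: eq_bigr => i _.
  by rewrite ffunE /dffun_of_fprod ffunE.
exact/onW_bij/dffun_of_fprod_bij.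
Qed.

Lemma sum_nat_delta (T : finType) (x : T) : (\sum_(i : T) (x == i))%N = 1%N.
Proof. by rewrite (bigD1 x) //= eqxx big1 // => i /negbTE; rewrite eq_sym => ->. Qed.

Lemma sum_scale_delta (R : pzRingType) (V : lmodType R) (T : finType) (F : T -> V) k :
  \sum_i (i == k)%:R *: F i = F k.
Proof.
by rewrite (bigD1 k) //= eqxx scale1r big1 ?addr0 // => i /negbTE ->; rewrite scale0r.
Qed.

Lemma perm_swap (T : eqType) (x y : T) s1 s2 :
  perm_eq (x :: s1 ++ y :: s2) (y :: s1 ++ x :: s2).
Proof.
by apply/permP => p; rewrite /= !count_cat /= addnCA [in RHS]addnCA (addnCA (p x)).
Qed.

(** * Ideals given by generators *)

Section IdealGen.
Variables (R : comNzRingType) (S : R -> Prop).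
Local Notation I := (ideal_gen S).

Lemma ideal_gen0 : I 0.
Proof. by exists 0%N, (fun _ => 0), (fun _ => 0); rewrite big_ord0; split => // -[]. Qed.

Lemma ideal_gen_mem p : S p -> I p.
Proof.
by move=> Sp; exists 1%N, (fun _ => p), (fun _ => 1); rewrite big_ord1 mul1r.
Qed.

Lemma ideal_genD p q : I p -> I q -> I (p + q).
Proof.
move=> [m1 [g1 [c1 [S1 ->]]]] [m2 [g2 [c2 [S2 ->]]]].
pose glue T (f1 : 'I_m1 -> T) (f2 : 'I_m2 -> T) i :=
  match split i with inl i1 => f1 i1 | inr i2 => f2 i2 end.
exists (m1 + m2)%N, (glue _ g1 g2), (glue _ c1 c2); split.
  by move=> i; rewrite /glue; case: (split i).
by rewrite big_split_ord /glue; congr (_ + _); apply: eq_bigr => i _;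
  rewrite (unsplitK (inl _)) || rewrite (unsplitK (inr _)).
Qed.

Lemma ideal_genMl c p : I p -> I (c * p).
Proof.
move=> [m [g [d [Sg ->]]]]; exists m, g, (fun i => c * d i); split => //.
by rewrite mulr_sumr; apply: eq_bigr => i _; rewrite mulrA.
Qed.

Lemma ideal_genMr c p : I p -> I (p * c).
Proof. by rewrite mulrC; apply: ideal_genMl. Qed.

Lemma ideal_gen_congr p q : I (p - q) -> I q -> I p.
Proof. by move=> Ipq Iq; rewrite -(subrK q p); apply: ideal_genD. Qed.

Lemma ideal_gen_sum (T : Type) (r : seq T) (P : pred T) (F : T -> R) :
  (forall i, P i -> I (F i)) -> I (\sum_(i <- r | P i) F i).
Proof.
by move=> IF; elim/big_rec: _ => [|i x /IF]; [exact: ideal_gen0 | apply: ideal_genD].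
Qed.

Lemma ideal_gen_sub (S' : R -> Prop) p :
  (forall q, S q -> S' q) -> I p -> ideal_gen S' p.
Proof. by move=> SS' [m [g [c [Sg ->]]]]; exists m, g, c; split => // i; apply/SS'. Qed.

Lemma ideal_gen_eq0 p : (forall q, S q -> q = 0) -> I p -> p = 0.
Proof.
by move=> S0 [m [g [c [Sg ->]]]]; rewrite big1 // => i _; rewrite (S0 _ (Sg i)) mulr0.
Qed.

End IdealGen.

(** * Polynomials supported on a set of monomials *)

Section SuppIn.
Variables (R : comNzRingType) (N : nat).
Implicit Types (p q : {mpoly R[N]}) (m : 'X_{1..N}).

Definition supp_in (P : 'X_{1..N} -> Prop) q := forall m, m \in msupp q -> P m.

Variable P : 'X_{1..N} -> Prop.

Lemma supp_in0 : supp_in P 0.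
Proof. by move=> m; rewrite msupp0. Qed.

Lemma supp_inD p q : supp_in P p -> supp_in P q -> supp_in P (p + q).
Proof. by move=> Pp Pq m /msuppD_le; rewrite mem_cat => /orP[/Pp|/Pq]. Qed.

Lemma supp_inB p q : supp_in P p -> supp_in P q -> supp_in P (p - q).
Proof. by move=> Pp Pq m /msuppB_le; rewrite mem_cat => /orP[/Pp|/Pq]. Qed.

Lemma supp_inZ c p : supp_in P p -> supp_in P (c *: p).
Proof. by move=> Pp m /msuppZ_le /Pp. Qed.

Lemma supp_inX m : P m -> supp_in P 'X_[m].
Proof. by move=> Pm m'; rewrite msuppX inE => /eqP ->. Qed.

Lemma supp_in_sum (T : Type) (r : seq T) (Q : pred T) (F : T -> {mpoly R[N]}) :
  (forall i, Q i -> supp_in P (F i)) -> supp_in P (\sum_(i <- r | Q i) F i).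
Proof.
by move=> PF; elim/big_rec: _ => [|i x /PF]; [exact: supp_in0 | apply: supp_inD].
Qed.

Section Submonoid.
Hypotheses (P0 : P 0%MM) (PD : forall m1 m2, P m1 -> P m2 -> P (m1 + m2)%MM).

Lemma supp_in1 : supp_in P 1.
Proof. by move=> m; rewrite msupp1 inE => /eqP ->. Qed.

Lemma supp_inM p q : supp_in P p -> supp_in P q -> supp_in P (p * q).
Proof.
by move=> Pp Pq m /msuppM_le /allpairsP[[m1 m2] /= [/Pp P1 /Pq P2 ->]]; apply: PD.
Qed.

Lemma supp_in_prod (T : Type) (r : seq T) (F : T -> {mpoly R[N]}) :
  (forall i, supp_in P (F i)) -> supp_in P (\prod_(i <- r) F i).
Proof.
by move=> PF; elim/big_rec: _ => [|i x _]; [exact: supp_in1 | apply/supp_inM].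
Qed.

Lemma supp_inXn p k : supp_in P p -> supp_in P (p ^+ k).
Proof. by move=> Pp; rewrite -[k]subn0 -prodr_const_nat; apply: supp_in_prod. Qed.

End Submonoid.

Lemma supp_inMr p q : (forall m1 m2, P m1 -> P (m1 + m2)%MM) ->
  supp_in P p -> supp_in P (p * q).
Proof.
by move=> PD Pp m /msuppM_le /allpairsP[[m1 m2] /= [/Pp P1 _ ->]]; apply: PD.
Qed.

Definition mext (V : lmodType R) (F : 'X_{1..N} -> V) q : V :=
  \sum_(m <- msupp q) q@_m *: F m.

Variables (V : lmodType R) (F : 'X_{1..N} -> V).

Lemma mextE q (r : seq 'X_{1..N}) : uniq r -> {subset msupp q <= r} ->
  mext F q = \sum_(m <- r) q@_m *: F m.
Proof.
move=> r_uniq qr; rewrite (bigID (mem (msupp q))) /= [X in _ = _ + X]big1; last first.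
  by move=> m /memN_msupp_eq0 ->; rewrite scale0r.
rewrite addr0 -big_filter; apply/perm_big/uniq_perm; rewrite ?filter_uniq ?msupp_uniq //.
by move=> m; rewrite mem_filter; case: (boolP (m \in msupp q)) => // /qr ->.
Qed.

Lemma mextD p q : mext F (p + q) = mext F p + mext F q.
Proof.
set r := undup (msupp p ++ msupp q); have r_uniq : uniq r := undup_uniq _.
rewrite [mext F (p + q)](mextE r_uniq); last by move=> m /msuppD_le; rewrite mem_undup.
rewrite [mext F p](mextE r_uniq); last by move=> m mp; rewrite mem_undup mem_cat mp.
rewrite [mext F q](mextE r_uniq); last by move=> m mq; rewrite mem_undup mem_cat mq orbT.
by rewrite -big_split; apply: eq_bigr => m _; rewrite mcoeffD scalerDl.
Qed.

Lemma mextZ c q : mext F (c *: q) = c *: mext F q.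
Proof.
rewrite (mextE (msupp_uniq q)); last exact: msuppZ_le.
by rewrite scaler_sumr; apply: eq_bigr => m _; rewrite mcoeffZ scalerA.
Qed.

Lemma mext0 : mext F 0 = 0.
Proof. by rewrite /mext msupp0 big_nil. Qed.

Lemma mextX m : mext F 'X_[m] = F m.
Proof. by rewrite /mext msuppX big_seq1 mcoeffX eqxx scale1r. Qed.

End SuppIn.

Section MonomialIdealRadical.
Variables (R : idomainType) (N : nat) (P : pred 'X_{1..N}).
Hypothesis P_up : forall m1 m2, P m1 -> P (m1 + m2)%MM.
Hypothesis P_root : forall m k, P (m *+ k.+1)%MM -> P m.

Lemma supp_in_root (q : {mpoly R[N]}) k : supp_in P (q ^+ k) -> supp_in P q.
Proof.
have [P0 _|P0] := boolP (P 0%MM).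
  by move=> m _; rewrite -[m]add0m; apply: P_up.
case: k => [|k] Pqk.
  by have := Pqk 0%MM; rewrite msupp1 mem_seq1 eqxx => /(_ isT); rewrite (negbTE P0).
pose qP := \sum_(m <- msupp q | P m) q@_m *: 'X_[m].
pose qN := \sum_(m <- msupp q | ~~ P m) q@_m *: 'X_[m].
have q_split : q = qP + qN by rewrite {1}[q]mpolyE (bigID P).
have PqP : supp_in P qP by apply: supp_in_sum => m Pm; apply: supp_inZ; apply: supp_inX.
have [qN0 | qN_neq0] := eqVneq qN 0; first by rewrite q_split qN0 addr0.
have PqNk : supp_in P (qN ^+ k.+1).
  have -> : qN ^+ k.+1 = q ^+ k.+1 - (q - qN) * \sum_(i < k.+1) q ^+ (k - i) * qN ^+ i.
    by rewrite -subrXX opprB addrC subrK.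
  by rewrite {2}q_split addrK; apply: supp_inB => //; apply: supp_inMr.
have := PqNk _ (mlead_supp (expf_neq0 k.+1 qN_neq0)).
rewrite mleadX // => /P_root PqN.
have : supp_in (fun m => ~~ P m) qN.
  by apply: supp_in_sum => m nPm; apply: supp_inZ; apply: supp_inX.
by move=> /(_ _ (mlead_supp qN_neq0)); rewrite PqN.
Qed.

End MonomialIdealRadical.

(** * Segre monomials *)

Section Segre.
Variables (K : fieldType) (n : nat) (a : 'I_n -> nat).
Local Notation R := (Rpoly K a).

Definition coord := option {j : 'I_n & 'I_(a j)}.
Definition ncoord := #|{: coord}|.

Definition rk0 : 'I_ncoord := enum_rank (None : coord).
Definition rk j (i : 'I_(a j)) : 'I_ncoord :=
  enum_rank (Some (Tagged (fun j => 'I_(a j)) i) : coord).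
Arguments rk : clear implicits.

Variant rk_spec : 'I_ncoord -> Type :=
  | Rk0 : rk_spec rk0
  | Rk j (i : 'I_(a j)) : rk_spec (rk j i).

Lemma rkP k : rk_spec k.
Proof. by rewrite -(enum_valK k); case: (enum_val k) => [[j i]|]; constructor. Qed.

Lemma rk0_eqF j i : (rk0 == rk j i) = false.
Proof. by rewrite (inj_eq enum_rank_inj). Qed.

Lemma eq_rk j j' (i : 'I_(a j)) (i' : 'I_(a j')) :
  (rk j i == rk j' i') = (Tagged (fun j => 'I_(a j)) i == Tagged _ i').
Proof. by rewrite (inj_eq enum_rank_inj). Qed.

Lemma eq_rk_same j (i i' : 'I_(a j)) : (rk j i == rk j i') = (i == i').
Proof. by rewrite eq_rk eq_Tagged. Qed.

Lemma eq_rk_diff j j' (i : 'I_(a j)) (i' : 'I_(a j')) :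
  j != j' -> (rk j i == rk j' i') = false.
Proof.
by move=> neq; rewrite eq_rk; apply/negP => /eqP /(congr1 tag) /= /eqP; apply/negP.
Qed.

Definition segre_mnm (t : idx a) : 'X_{1..ncoord} := (U_(rk0) + \sum_j U_(rk j (t j)))%MM.

Lemma segre_mnm_rk0 t : segre_mnm t rk0 = 1%N.
Proof.
by rewrite mnmDE mnm1E eqxx mnm_sumE big1 // => j _; rewrite mnm1E eq_sym rk0_eqF.
Qed.

Lemma segre_mnm_rk t j i : segre_mnm t (rk j i) = (t j == i).
Proof.
rewrite mnmDE mnm1E rk0_eqF mnm_sumE (bigD1 j) //= big1 => [|j' j'j].
  by rewrite mnm1E eq_rk_same addn0.
by rewrite mnm1E eq_rk_diff.
Qed.

Lemma segre_mnm_le1 t k : (segre_mnm t k <= 1)%N.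
Proof. by case: (rkP k) => [|j i]; rewrite ?segre_mnm_rk0 ?segre_mnm_rk ?leq_b1. Qed.

Definition balanced (m : 'X_{1..ncoord}) := forall j, (\sum_i m (rk j i))%N = m rk0.

Lemma balanced0 : balanced 0%MM.
Proof. by move=> j; rewrite mnm0E big1 // => i _; rewrite mnm0E. Qed.

Lemma balancedD m1 m2 : balanced m1 -> balanced m2 -> balanced (m1 + m2)%MM.
Proof.
move=> b1 b2 j; rewrite mnmDE -(b1 j) -(b2 j) -big_split /=.
by apply: eq_bigr => i _; rewrite mnmDE.
Qed.

Lemma balanced_segre_mnm t : balanced (segre_mnm t).
Proof.
by move=> j; under eq_bigr => i _ do rewrite segre_mnm_rk; rewrite sum_nat_delta segre_mnm_rk0.
Qed.

Lemma balancedBr m t :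
  balanced m -> (segre_mnm t <= m)%MM -> balanced (m - segre_mnm t)%MM.
Proof.
move=> bm le_tm j; have := bm j; rewrite -{1 2}(submK le_tm).
rewrite mnmDE segre_mnm_rk0 addn1; under eq_bigr => i _ do rewrite mnmDE.
by rewrite big_split /= balanced_segre_mnm segre_mnm_rk0 addn1 => -[].
Qed.

Lemma balanced_eq0 m : balanced m -> m rk0 = 0%N -> m = 0%MM.
Proof.
move=> bm m0; apply/mnmP => k; rewrite mnm0E; case: (rkP k) => [|j i] //.
by apply/eqP; move/eqP: (bm j); rewrite m0 sum_nat_eq0 => /forallP /(_ i).
Qed.

Lemma balanced_segre_le m : balanced m -> (0 < m rk0)%N ->
  exists t, (segre_mnm t <= m)%MM.
Proof.
move=> bm m_gt0.
have /fin_all_exists [u u_pos] : forall j, exists i, (0 < m (rk j i))%N.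
  move=> j; have : (0 < \sum_i m (rk j i))%N by rewrite bm.
  by rewrite lt0n sum_nat_eq0 => /forallPn [i]; rewrite -lt0n; exists i.
exists (finfun u); apply/mnm_lepP => k; case: (rkP k) => [|j i].
  by rewrite segre_mnm_rk0.
by rewrite segre_mnm_rk ffunE; case: eqP => // <-.
Qed.

Definition col j (L : seq (idx a)) : seq 'I_(a j) := [seq t j | t : idx a <- L].

Definition segre_mnms (L : seq (idx a)) : 'X_{1..ncoord} := (\sum_(t <- L) segre_mnm t)%MM.

Lemma segre_mnms_rk0 L : segre_mnms L rk0 = size L.
Proof.
elim: L => [|t L IH]; first by rewrite /segre_mnms big_nil mnm0E.
by rewrite /segre_mnms big_cons mnmDE segre_mnm_rk0 -/(segre_mnms L) IH.
Qed.

Lemma segre_mnms_rk L j i : segre_mnms L (rk j i) = count_mem i (col j L).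
Proof.
elim: L => [|t L IH]; first by rewrite /segre_mnms big_nil mnm0E.
by rewrite /segre_mnms big_cons mnmDE segre_mnm_rk -/(segre_mnms L) IH.
Qed.

Lemma balanced_segre_mnms L : balanced (segre_mnms L).
Proof.
rewrite /segre_mnms; elim/big_rec: _ => [|t m _]; first exact: balanced0.
exact/balancedD/balanced_segre_mnm.
Qed.

Lemma segre_mnms_cols L L' : segre_mnms L = segre_mnms L' ->
  size L = size L' /\ forall j, perm_eq (col j L) (col j L').
Proof.
move=> eqLL'; split; first by rewrite -!segre_mnms_rk0 eqLL'.
by move=> j; apply/allP => i _ /=; rewrite -!segre_mnms_rk eqLL'.
Qed.

(* Greedy decomposition of a balanced monomial into Segre monomials; the junk
   value [::] is never reached on balanced input ([balanced_segre_le]). *)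
Fixpoint segre_split (d : nat) (m : 'X_{1..ncoord}) : seq (idx a) :=
  if d is d'.+1 then
    if [pick t | (segre_mnm t <= m)%MM] is Some t
    then t :: segre_split d' (m - segre_mnm t)%MM else [::]
  else [::].

Lemma segre_splitK m : balanced m -> segre_mnms (segre_split (m rk0) m) = m.
Proof.
suff split_ok d : forall m : 'X_{1..ncoord},
    m rk0 = d -> balanced m -> segre_mnms (segre_split d m) = m.
  exact: split_ok.
elim: d => [|d IH] {}m md bm /=.
  by rewrite (balanced_eq0 bm md) /segre_mnms big_nil.
case: pickP => [t le_tm | none]; last first.
  by have [|t] := balanced_segre_le bm; rewrite ?md ?none.
have md' : (m - segre_mnm t)%MM rk0 = d.
  by move: md; rewrite -{1}(submK le_tm) mnmDE segre_mnm_rk0 addn1 => -[].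
rewrite /segre_mnms big_cons -/(segre_mnms _) IH //; last exact: balancedBr.
by rewrite addmC submK.
Qed.

Definition xprod (L : seq (idx a)) : R := \prod_(t <- L) var K t.

Definition mnm_tuples (m : 'X_{1..nvar a}) : seq (idx a) :=
  flatten [seq nseq (m k) (enum_val k) | k <- enum 'I_(nvar a)].

Lemma xprod_mnm_tuples m : xprod (mnm_tuples m) = 'X_[m].
Proof.
rewrite /xprod big_flatten big_map big_enum mpolyXE_id /=; apply: eq_bigr => k _.
by rewrite big_nseq /var enum_valK; elim: (m k) => //= e ->; rewrite exprS.
Qed.

Definition lift_mnm (h : idx a -> R) (m : 'X_{1..ncoord}) : R :=
  \prod_(t <- segre_split (m rk0) m) h t.

(** * Straightening modulo the minors *)

Local Notation IA := (ideal_gen (@is_minor K n a)).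

Definition equiv_minors (L L' : seq (idx a)) :=
  [/\ IA (xprod L - xprod L'), size L = size L' & forall j, perm_eq (col j L) (col j L')].

Lemma equiv_minors_refl L : equiv_minors L L.
Proof. by split=> //; rewrite subrr; apply: ideal_gen0. Qed.

Lemma equiv_minors_trans L1 L2 L3 :
  equiv_minors L1 L2 -> equiv_minors L2 L3 -> equiv_minors L1 L3.
Proof.
move=> [I12 s12 c12] [I23 s23 c23]; split; last 2 first.
- by rewrite s12.
- by move=> j; apply: perm_trans (c12 j) (c23 j).
by rewrite -(subrKA (xprod L2)); apply: ideal_genD.
Qed.

Lemma equiv_minors_cons t L L' : equiv_minors L L' -> equiv_minors (t :: L) (t :: L').
Proof.
move=> [I s c]; split=> [|/=|j]; last 2 first.
- by rewrite s.
- by rewrite /col /= perm_cons; apply: c.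
by rewrite /xprod !big_cons -mulrBr; apply: ideal_genMl.
Qed.

Lemma equiv_minors_swap v w l r1 r2 :
  equiv_minors (v :: r1 ++ w :: r2) (upd v w l :: r1 ++ upd w v l :: r2).
Proof.
split=> [|/=|j]; last 2 first.
- by rewrite !size_cat.
- rewrite /col /= !map_cat /= /upd !ffunE.
  by case: eqP => _; [apply: perm_swap | apply: perm_refl].
have -> : xprod (v :: r1 ++ w :: r2) - xprod (upd v w l :: r1 ++ upd w v l :: r2)
    = gminor K v w l * (xprod r1 * xprod r2).
  by rewrite /xprod /gminor !big_cons !big_cat /= !big_cons; ring.
by apply/ideal_genMr/ideal_gen_mem; exists v, w, l.
Qed.

(* Swap the mismatched coordinate l of the head with a later tuple carrying u_l:
   one generalized minor, and one mismatch fewer. *)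
Lemma equiv_minors_head (u v : idx a) rest : (forall j, u j \in col j (v :: rest)) ->
  exists rest', equiv_minors (v :: rest) (u :: rest').
Proof.
have [k] := ubnP #|[set j | v j != u j]|; elim: k v rest => // k IH v rest.
rewrite ltnS => mismatch u_cols.
have [/eqP|] := posnP #|[set j | v j != u j]|.
  rewrite cards_eq0 => /eqP/setP v_u.
  suff -> : v = u by exists rest; apply: equiv_minors_refl.
  by apply/ffunP => j; apply/eqP; have := v_u j; rewrite !inE => /negbFE.
rewrite card_gt0 => /set0Pn [l]; rewrite inE => vul.
have : u l \in col l rest by move: (u_cols l); rewrite inE eq_sym (negbTE vul).
case/mapP => w w_rest ul; move: u_cols; case/splitPr: w_rest => r1 r2 u_cols.
have swapped := equiv_minors_swap v w l r1 r2.
have fewer : (#|[set j | upd v w l j != u j]| < k)%N.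
  apply: leq_trans mismatch; apply: proper_card; apply/properP; split.
    by apply/subsetP => j; rewrite !inE ffunE; case: (j =P l) => [->|//]; rewrite ul eqxx.
  by exists l; rewrite !inE ?ffunE ?eqxx -?ul ?eqxx.
have u_cols' j : u j \in col j (upd v w l :: r1 ++ upd w v l :: r2).
  by case: swapped => _ _ /(_ j) /perm_mem sw; rewrite -sw; apply: u_cols.
have [rest' eq_rest'] := IH _ _ fewer u_cols'.
by exists rest'; apply: equiv_minors_trans eq_rest'.
Qed.

Lemma equiv_minors_cols L L' : size L = size L' ->
  (forall j, perm_eq (col j L) (col j L')) -> equiv_minors L L'.
Proof.
elim: L' L => [|u L' IH] [|v rest] //= => [_ _|[s_rest] cols].
  exact: equiv_minors_refl.
have [rest' eq_rest'] : exists rest', equiv_minors (v :: rest) (u :: rest').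
  by apply: equiv_minors_head => j; rewrite (perm_mem (cols j)) mem_head.
case: (eq_rest') => _ [s_rest'] cols'.
apply: (equiv_minors_trans eq_rest'); apply/equiv_minors_cons/IH => [|j].
  by rewrite -s_rest'.
by move: (cols' j); rewrite perm_sym => /perm_trans/(_ (cols j)); rewrite /col /= perm_cons.
Qed.

Lemma segre_mnms_minors L L' : segre_mnms L = segre_mnms L' -> IA (xprod L - xprod L').
Proof. by case/segre_mnms_cols => s c; case: (equiv_minors_cols s c). Qed.

(** * The parametrization phi and its kernel *)

Section BasePoint.
Variable z : idx a.
Local Notation S := {mpoly K[ncoord]}.

Definition y0 : S := 'X_rk0.
Definition y j (i : 'I_(a j)) : S := 'X_(rk j i).
Arguments y : clear implicits.

Definition w j (i : 'I_(a j)) : S :=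
  if i == z j then y j i - \sum_(i' | i' != z j) y j i' else y j i.
Arguments w : clear implicits.

Definition phi : R -> S :=
  mmap (@mpolyC _ K) (fun k : 'I_(nvar a) => y0 * \prod_j w j (enum_val k j)).
HB.instance Definition _ := GRing.RMorphism.on phi.

(* Undoes the change of coordinates ([chi_w]), so that [chi \o phi] is the
   monomial map x_t |-> y_0 prod_j y_{j,t_j}. *)
Definition chi : S -> S := mmap (@mpolyC _ K) (fun k : 'I_ncoord =>
  if enum_val k is Some (existT j i) then
    if i == z j then \sum_i' y j i' else 'X_k
  else 'X_k).
HB.instance Definition _ := GRing.RMorphism.on chi.

Lemma phiZ c p : phi (c *: p) = c *: phi p.
Proof. by rewrite /phi mmapZ mul_mpolyC. Qed.

Lemma chiZ c q : chi (c *: q) = c *: chi q.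
Proof. by rewrite /chi mmapZ mul_mpolyC. Qed.

Lemma phi_var t : phi (var K t) = y0 * \prod_j w j (t j).
Proof. by rewrite /phi /var mmapX mmap1U enum_rankK. Qed.

Lemma chi_y0 : chi y0 = y0.
Proof. by rewrite /chi /y0 mmapX mmap1U enum_rankK. Qed.

Lemma chi_y j i : chi (y j i) = if i == z j then \sum_i' y j i' else y j i.
Proof. by rewrite /chi /y mmapX mmap1U enum_rankK. Qed.

Lemma chi_w j i : chi (w j i) = y j i.
Proof.
rewrite /w; case: ifP => [/eqP -> | zi]; last by rewrite chi_y zi.
rewrite rmorphB rmorph_sum /= chi_y eqxx (bigD1 (z j)) //=.
by under [X in _ - X]eq_bigr => i' /negbTE zi' do rewrite chi_y zi'; rewrite addrK.
Qed.

Lemma segre_mnmX t : 'X_[segre_mnm t] = y0 * \prod_j y j (t j).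
Proof. by rewrite mpolyXD -mprodXE. Qed.

Lemma chi_phi_xprod L : chi (phi (xprod L)) = 'X_[segre_mnms L].
Proof.
rewrite /xprod /segre_mnms -mprodXE !rmorph_prod; apply: eq_bigr => t _ /=.
rewrite phi_var rmorphM rmorph_prod /= chi_y0 segre_mnmX.
by congr (_ * _); apply: eq_bigr => j _; rewrite chi_w.
Qed.

Lemma phi_ker_minors p : IA (p - mext (lift_mnm (@var K n a)) (chi (phi p))).
Proof.
elim/mpolyind: p => [|c m p _ _ IH].
  by rewrite !rmorph0 mext0 subrr; apply: ideal_gen0.
rewrite !rmorphD /= mextD phiZ chiZ mextZ.
have -> : forall (X Y U V : R), c *: X + Y - (c *: U + V) = c%:MP * (X - U) + (Y - V).
  by move=> X Y U V; rewrite -!mul_mpolyC; ring.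
apply/ideal_genD/IH/ideal_genMl.
rewrite -xprod_mnm_tuples chi_phi_xprod mextX; apply: segre_mnms_minors.
by rewrite segre_splitK //; apply: balanced_segre_mnms.
Qed.

Lemma phi_ker p : phi p = 0 -> IA p.
Proof. by move=> phi0; have := phi_ker_minors p; rewrite phi0 rmorph0 mext0 subr0. Qed.

Definition omega j (o : option 'I_(a j)) : S := if o is Some k then w j k else y j (z j).
Arguments omega : clear implicits.

Definition omega_coef j (o : option 'I_(a j)) (i : 'I_(a j)) : K :=
  match o with
  | Some k => if k == z j then (if i == z j then 1 else -1) else (i == k)%:R
  | None => (i == z j)%:R
  end.
Arguments omega_coef : clear implicits.

Lemma omegaE j o : omega j o = \sum_i omega_coef j o i *: y j i.
Proof.
case: o => [k|] /=; last by rewrite sum_scale_delta.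
rewrite /w; case: eqP => [-> | _]; last by rewrite sum_scale_delta.
rewrite [RHS](bigD1 (z j)) //= eqxx scale1r -sumrN; congr (_ + _).
by apply: eq_bigr => i /negbTE ->; rewrite scaleN1r.
Qed.

Lemma sum_w j : \sum_i w j i = y j (z j).
Proof.
rewrite (bigD1 (z j)) //= {1}/w eqxx.
by under eq_bigr => i /negbTE zi do rewrite /w zi; rewrite subrK.
Qed.

Lemma phi_xsigma s : phi (xsigma K s) = y0 * \prod_j omega j (s j).
Proof.
have omega_match j :
    omega j (s j) = \sum_i (if s j is Some k then i == k else true)%:R *: w j i.
  case: (s j) => [k|] /=; last by rewrite -sum_w; apply: eq_bigr => i _; rewrite scale1r.
  by rewrite sum_scale_delta.
under eq_bigr => j _ do rewrite omega_match.
rewrite /xsigma rmorph_sum big_mkcond big_distr_dffun mulr_sumr; apply: eq_bigr => t _ /=.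
rewrite scaler_prod -scalerAr -phi_var.
case: (boolP (matches s t)) => [/forallP st | /forallPn [j]].
  rewrite big1 ?scale1r // => j _.
  by move: (st j); case: (s j) => [k /eqP ->|]; rewrite ?eqxx.
by rewrite (bigD1 j) //=; case: (s j) => [k /negbTE ->|//]; rewrite mul0r scale0r.
Qed.

Lemma prod_linear_forms (f : forall j, 'I_(a j) -> K) :
  y0 * \prod_j \sum_i f j i *: y j i
  = \sum_(c : idx a) (\prod_j f j (c j)) *: 'X_[segre_mnm c].
Proof.
rewrite big_distr_dffun mulr_sumr; apply: eq_bigr => c _.
by rewrite scaler_prod -scalerAr segre_mnmX.
Qed.

Lemma phi_balanced p : supp_in balanced (phi p).
Proof.
have bal_forms (f : forall j, 'I_(a j) -> K) :
    supp_in balanced (y0 * \prod_j \sum_i f j i *: y j i).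
  rewrite prod_linear_forms; apply: supp_in_sum => c _.
  by apply: supp_inZ; apply: supp_inX; apply: balanced_segre_mnm.
rewrite [p]mpolyE rmorph_sum /=; apply: supp_in_sum => m _; rewrite phiZ; apply: supp_inZ.
rewrite mpolyXE_id rmorph_prod /=; apply: supp_in_prod => [||k].
- exact: balanced0.
- exact: balancedD.
rewrite rmorphXn /=; apply: supp_inXn => [||]; [exact: balanced0 | exact: balancedD |].
have -> : 'X_k = var K (enum_val k) :> R by rewrite /var enum_valK.
rewrite phi_var.
by under eq_bigr => j _ do rewrite -[w j _]/(omega j (Some _)) omegaE; apply: bal_forms.
Qed.

Lemma phi_lift_mnm (h : idx a -> R) m :
  (forall t, phi (h t) = 'X_[segre_mnm t]) -> balanced m -> phi (lift_mnm h m) = 'X_[m].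
Proof.
move=> phi_h bm; rewrite rmorph_prod /=.
under eq_bigr => t _ do rewrite phi_h.
by rewrite mprodXE -/(segre_mnms _) segre_splitK.
Qed.

Lemma phi_mext_lift (h : idx a -> R) q :
  (forall t, phi (h t) = 'X_[segre_mnm t]) -> supp_in balanced q ->
  phi (mext (lift_mnm h) q) = q.
Proof.
move=> phi_h bq; rewrite rmorph_sum /= [RHS]mpolyE big_seq [RHS]big_seq.
by apply: eq_bigr => m qm; rewrite phiZ phi_lift_mnm //; apply: bq.
Qed.

Definition xsig (t : idx a) : R :=
  xsigma K [ffun j => if t j == z j then None else Some (t j)].

Lemma phi_xsig t : phi (xsig t) = 'X_[segre_mnm t].
Proof.
rewrite phi_xsigma segre_mnmX; congr (_ * _); apply: eq_bigr => j _.
by rewrite ffunE /omega /w; case: eqP => [->|/eqP/negbTE ->].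
Qed.

Lemma phi_gminor t u l : phi (gminor K t u l) = 0.
Proof.
rewrite /gminor rmorphB !rmorphM /= !phi_var mulrACA [X in _ - X]mulrACA -!big_split /=.
by apply/eqP; rewrite subr_eq0; apply/eqP; congr (_ * _); apply: eq_bigr => j _;
  rewrite /upd !ffunE; case: eqP => // _; rewrite mulrC.
Qed.

(** * The image of I(A) + L_Gamma *)

Section Gamma.
Variable Gamma : {set {set 'I_n}}.
Local Notation I := (ideal_gen (fun p : R =>
  is_minor p \/ exists2 J : {set 'I_n}, J \in Gamma & is_Lgen J p)).

Lemma phi_ker_ideal p : phi p = 0 -> I p.
Proof. by move/phi_ker; apply: ideal_gen_sub => q; left. Qed.

Definition mgamma (m : 'X_{1..ncoord}) : bool :=
  [exists J in Gamma, exists t : idx a,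
     [forall j in ~: J, t j == z j] && (segre_mnm t <= m)%MM].

Lemma mgamma_up m1 m2 : mgamma m1 -> mgamma (m1 + m2)%MM.
Proof.
case/exists_inP => J JG /existsP [t /andP [tz le_tm]]; apply/exists_inP; exists J => //.
by apply/existsP; exists t; rewrite tz (lepm_trans le_tm) ?lem_addr.
Qed.

Lemma mgamma_root m k : mgamma (m *+ k.+1)%MM -> mgamma m.
Proof.
case/exists_inP => J JG /existsP [t /andP [tz /mnm_lepP le_tm]]; apply/exists_inP.
exists J => //; apply/existsP; exists t; rewrite tz; apply/mnm_lepP => i.
have := le_tm i; rewrite mulmnE; have := segre_mnm_le1 t i.
by case: (m i) => [|e] le1; rewrite ?mul0n // => _; apply: leq_trans le1 _.
Qed.

Lemma phi_Lgen J (s : ptuple a) :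
  J \in Gamma -> (forall j, (s j != None) = (j \in J)) -> supp_in mgamma (phi (xsigma K s)).
Proof.
move=> JG sJ; rewrite phi_xsigma; under eq_bigr => j _ do rewrite omegaE.
rewrite prod_linear_forms; apply: supp_in_sum => t _.
have [tz | /forallPn [j]] := boolP [forall j in ~: J, t j == z j].
  apply: supp_inZ; apply: supp_inX; apply/exists_inP; exists J => //.
  by apply/existsP; exists t; rewrite tz lepm_refl.
rewrite negb_imply in_setC => /andP [jJ tjz].
have sj : s j = None by move: (sJ j); rewrite (negbTE jJ); case: (s j).
by rewrite (bigD1 j) //= sj /= (negbTE tjz) mul0r scale0r; apply: supp_in0.
Qed.

Lemma phi_ideal q : I q -> supp_in mgamma (phi q).
Proof.
case=> m [g [c [gen ->]]]; rewrite rmorph_sum /=; apply: supp_in_sum => i _.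
rewrite rmorphM /= mulrC; apply: supp_inMr; first exact: mgamma_up.
case: (gen i) => [[t [u [l ->]]] | [J JG [s [sJ ->]]]]; last exact: phi_Lgen JG sJ.
by rewrite phi_gminor; apply: supp_in0.
Qed.

Lemma xsigma_in_ideal J (s : ptuple a) :
  J \in Gamma -> (forall j, s j != None -> j \in J) -> I (xsigma K s).
Proof.
move=> JG sJ.
pose restr (t : idx a) : ptuple a := [ffun j => if j \in J then Some (t j) else None].
pose suppJ := [pred s' : ptuple a | [forall j, (s' j != None) == (j \in J)]].
rewrite /xsigma (partition_big restr suppJ);
  last by move=> t _; apply/forallP => j; rewrite ffunE; case: (j \in J).
apply: ideal_gen_sum => s' /forallP /= s'J.
have [compat | incompat] := boolP [forall j, if s j is Some k then s' j == Some k else true].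
  have -> : \sum_(t | matches s t && (restr t == s')) var K t = xsigma K s'.
    apply: eq_bigl => t; apply/andP/forallP => [[_ /eqP <-] j | s't].
      by rewrite ffunE; case: (j \in J).
    split.
      apply/forallP => j; move: (forallP compat j) (s't j).
      by case: (s j) => [k /eqP ->|].
    apply/eqP/ffunP => j; rewrite ffunE; move: (s'J j) (s't j).
    by case: (s' j) => [k|]; case: (j \in J) => // _ /eqP ->.
  apply: ideal_gen_mem; right; exists J => //.
  by exists s'; split=> // j; move/eqP: (s'J j).
rewrite big_pred0; first exact: ideal_gen0.
move=> t; apply/andP => -[st /eqP rt].
move/negP: incompat; apply; apply/forallP => j; move: (forallP st j) (sJ j).
by rewrite -rt ffunE; case: (s j) => [k /eqP -> /(_ isT) ->|].
Qed.

(* The lift of m and x_{sig t} times the lift of m - segre_mnm t have the same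
   image, so they differ by an element of I(A). *)
Lemma ideal_lift_mnm m : mgamma m -> balanced m -> I (lift_mnm xsig m).
Proof.
case/exists_inP => J JG /existsP [t /andP [/forallP tz le_tm]] bm.
have bm' : balanced (m - segre_mnm t)%MM by apply: balancedBr.
have xsig_t : I (xsig t).
  apply: (xsigma_in_ideal JG) => j; rewrite ffunE.
  case: (t j =P z j) => // /eqP tjz _; apply: contraR tjz => jJ.
  by move: (tz j); rewrite in_setC jJ.
apply: (ideal_gen_congr _ (ideal_genMr (lift_mnm xsig (m - segre_mnm t)) xsig_t)).
apply: phi_ker_ideal; rewrite rmorphB rmorphM /= phi_xsig.
rewrite (phi_lift_mnm phi_xsig bm) (phi_lift_mnm phi_xsig bm').
by rewrite -mpolyXD addmC submK ?subrr.
Qed.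

Lemma minors_Lgamma_radical : radical I.
Proof.
move=> p k Ipk.
have Mp : supp_in mgamma (phi p).
  apply: (supp_in_root mgamma_up mgamma_root (k := k)).
  by rewrite -rmorphXn; apply: phi_ideal.
have I_lift : I (mext (lift_mnm xsig) (phi p)).
  rewrite /mext big_seq; apply: ideal_gen_sum => m pm; rewrite -mul_mpolyC.
  by apply/ideal_genMl/ideal_lift_mnm; [exact: Mp pm | exact: phi_balanced pm].
apply: (ideal_gen_congr _ I_lift).
apply: phi_ker_ideal; rewrite rmorphB /= phi_mext_lift ?subrr //.
  exact: phi_xsig.
exact: phi_balanced.
Qed.

End Gamma.

End BasePoint.

End Segre.

Theorem lemma7p2 (K : fieldType) (n : nat) (a : 'I_n -> nat) (Gamma : {set {set 'I_n}}) :
  radical (ideal_gen (fun p : Rpoly K a =>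
             is_minor p \/ exists2 J : {set 'I_n}, J \in Gamma & is_Lgen J p)).
Proof.
have [z _ | no_tuple] := pickP (fun _ : idx a => true).
  exact: minors_Lgamma_radical.
have gens0 (q : Rpoly K a) :
    (is_minor q \/ exists2 J : {set 'I_n}, J \in Gamma & is_Lgen J q) -> q = 0.
  case=> [[t] | [J _ [s [_ ->]]]]; first by have := no_tuple t.
  by rewrite /xsigma big_pred0 // => t; have := no_tuple t.
move=> p k /(ideal_gen_eq0 gens0) /eqP; rewrite expf_eq0 => /andP [_ /eqP ->].
exact: ideal_gen0.
Qed.
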